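(* There exist a real $3\times 3$ matrix $A$ and a real $1\times 3$ matrix $B$ such that the non-termination set $\mathrm{NT}=\{\vec{x}\in\mathbb{R}^3: BA^k\vec{x}\ge 0 \text{ for all integers } k\ge 0\}$ of the loop ''while $(B\vec{x}\ge 0)$ $\{\vec{x}:=A\vec{x}\}$'' is not a semi-algebraic set. In particular, non-termination sets of homogeneous simple linear loops with more than two variables cannot in general be defined by Tarski formulae.
   Context: A semi-algebraic subset of $\mathbb{R}^n$ is a set of the form $\bigcup_{i=1}^s\bigcap_{j=1}^{r_i}\{\vec{x}\in\mathbb{R}^n: f_{i,j}(\vec{x})\,\triangleleft_{i,j}\,0\}$ with finitely many polynomials $f_{i,j}\in\mathbb{R}[x_1,\dots,x_n]$ and $\triangleleft_{i,j}\in\{<,=\}$; these are exactly the sets definable by Tarski formulae (Boolean combinations of polynomial equalities and inequalities). *)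

From Stdlib Require Import Reals List.
Import ListNotations.
Open Scope R_scope.

Inductive idx3 : Set := I0 | I1 | I2.

Definition vec3 := idx3 -> R.
Definition mat33 := idx3 -> idx3 -> R.
Definition row3 := idx3 -> R.

Definition matvec (A : mat33) (x : vec3) : vec3 :=
  fun i => A i I0 * x I0 + A i I1 * x I1 + A i I2 * x I2.

Definition rowvec (B : row3) (x : vec3) : R :=
  B I0 * x I0 + B I1 * x I1 + B I2 * x I2.

Definition matpow_vec (A : mat33) (k : nat) (x : vec3) : vec3 :=
  Nat.iter k (matvec A) x.

Definition NT (A : mat33) (B : row3) : vec3 -> Prop :=
  fun x => forall k : nat, 0 <= rowvec B (matpow_vec A k x).

Inductive poly3 : Type :=
| PVar : idx3 -> poly3
| PConst : R -> poly3
| PAdd : poly3 -> poly3 -> poly3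
| PMul : poly3 -> poly3 -> poly3.

Fixpoint peval (p : poly3) (x : vec3) : R :=
  match p with
  | PVar i => x i
  | PConst c => c
  | PAdd p q => peval p x + peval q x
  | PMul p q => peval p x * peval q x
  end.

Definition atom_holds (a : poly3 * bool) (x : vec3) : Prop :=
  let (f, strict) := a in
  if strict then peval f x < 0 else peval f x = 0.

Definition semialgebraic (S : vec3 -> Prop) : Prop :=
  exists L : list (list (poly3 * bool)),
    forall x : vec3,
      S x <-> Exists (fun c => Forall (fun a => atom_holds a x) c) L.

(* Loop: x := A x with A = diag(1, 2, 4) and guard B x = x0 + x1 + x2 >= 0.
   Along the polynomial curve  gamma(t) = (15/16, -2t, t^2)  the guard after
   k iterations equals  (2^k t - 1)^2 - 1/16,  so gamma(t) is in NT exactly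
   when no dyadic multiple 2^k t lies in the open interval (3/4, 5/4).  Hence
   membership oscillates as t -> 0+: gamma(2^-m) is never in NT, while
   gamma(11/8 * 2^-m) always is.

   On the other hand, pulling a semi-algebraic set back along a polynomial
   curve gives a set whose membership is eventually constant as t -> 0+:
   every real univariate polynomial has a constant sign on some interval
   (0, e), and this "settling" property is stable under finite Boolean
   combinations. *)

From Stdlib Require Import Reals List Lra Lia.
Import ListNotations.
Open Scope R_scope.

Definition near0 (P : R -> Prop) : Prop :=
  exists e, 0 < e /\ forall t, 0 < t < e -> P t.

Lemma near0_always (P : R -> Prop) : (forall t, P t) -> near0 P.
Proof. intros HP; exists 1; split; [lra | auto]. Qed.

Lemma near0_mono (P Q : R -> Prop) :
  (forall t, 0 < t -> P t -> Q t) -> near0 P -> near0 Q.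
Proof.
  intros HPQ [e [He HP]]; exists e; split; [exact He |].
  intros t Ht; apply HPQ; [lra | auto].
Qed.

Lemma near0_and (P Q : R -> Prop) :
  near0 P -> near0 Q -> near0 (fun t => P t /\ Q t).
Proof.
  intros [e1 [He1 H1]] [e2 [He2 H2]]; exists (Rmin e1 e2).
  split; [now apply Rmin_glb_lt |].
  intros t Ht; pose proof (Rmin_l e1 e2); pose proof (Rmin_r e1 e2).
  split; [apply H1 | apply H2]; lra.
Qed.

Lemma near0_geometric (P : R -> Prop) (c : R) :
  0 < c -> near0 P -> exists m, P (c * (/ 2) ^ m).
Proof.
  intros Hc [e [He HP]].
  destruct (pow_lt_1_zero (/ 2) ltac:(rewrite Rabs_right; lra) (e / c)
              ltac:(apply Rdiv_lt_0_compat; lra)) as [m Hm].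
  specialize (Hm m (le_n m)).
  assert (Hpos : 0 < (/ 2) ^ m) by (apply pow_lt; lra).
  rewrite Rabs_right in Hm by lra.
  exists m; apply HP; split; [nra |].
  apply (Rmult_lt_compat_l c) in Hm; [| exact Hc].
  replace (c * (e / c)) with e in Hm by (field; lra); lra.
Qed.

Fixpoint ev (l : list R) (t : R) : R :=
  match l with [] => 0 | a :: l' => a + t * ev l' t end.

Fixpoint ladd (l1 l2 : list R) : list R :=
  match l1, l2 with
  | [], _ => l2
  | _, [] => l1
  | a :: l1', b :: l2' => (a + b) :: ladd l1' l2'
  end.

Lemma ev_ladd l1 l2 t : ev (ladd l1 l2) t = ev l1 t + ev l2 t.
Proof.
  revert l2; induction l1 as [| a l1 IH]; intros [| b l2]; simpl; try ring.
  rewrite IH; ring.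
Qed.

Fixpoint lmul (l1 l2 : list R) : list R :=
  match l1 with
  | [] => []
  | a :: l1' => ladd (map (Rmult a) l2) (0 :: lmul l1' l2)
  end.

Lemma ev_scale a l t : ev (map (Rmult a) l) t = a * ev l t.
Proof. induction l as [| b l IH]; simpl; [ring |]; rewrite IH; ring. Qed.

Lemma ev_lmul l1 l2 t : ev (lmul l1 l2) t = ev l1 t * ev l2 t.
Proof.
  induction l1 as [| a l1 IH]; simpl; [ring |].
  rewrite ev_ladd, ev_scale; simpl; rewrite IH; ring.
Qed.

Definition upoly (f : R -> R) : Prop := exists l, forall t, f t = ev l t.

Lemma upoly_const c : upoly (fun _ => c).
Proof. exists [c]; intros; simpl; ring. Qed.

Lemma upoly_id : upoly (fun t => t).
Proof. exists [0; 1]; intros; simpl; ring. Qed.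

Lemma upoly_add f g : upoly f -> upoly g -> upoly (fun t => f t + g t).
Proof.
  intros [l1 H1] [l2 H2]; exists (ladd l1 l2); intros t.
  now rewrite ev_ladd, H1, H2.
Qed.

Lemma upoly_mul f g : upoly f -> upoly g -> upoly (fun t => f t * g t).
Proof.
  intros [l1 H1] [l2 H2]; exists (lmul l1 l2); intros t.
  now rewrite ev_lmul, H1, H2.
Qed.

Lemma ev_bounded l :
  exists M, 0 <= M /\ forall t, 0 < t < 1 -> Rabs (ev l t) <= M.
Proof.
  induction l as [| a l [M [HM HB]]]; simpl.
  - exists 0; split; [lra |]; intros; rewrite Rabs_R0; lra.
  - exists (Rabs a + M); split; [pose proof (Rabs_pos a); lra |].
    intros t Ht; eapply Rle_trans; [apply Rabs_triang |].
    rewrite Rabs_mult, (Rabs_right t) by lra.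
    specialize (HB t Ht); pose proof (Rabs_pos (ev l t)); nra.
Qed.

Lemma near0_small_multiple (g : R -> R) (M c : R) :
  0 <= M -> 0 < c -> (forall t, 0 < t < 1 -> Rabs (g t) <= M) ->
  near0 (fun t => Rabs (t * g t) < c).
Proof.
  intros HM Hc HB; exists (Rmin 1 (c / (M + 1))).
  assert (Hq : 0 < c / (M + 1)) by (apply Rdiv_lt_0_compat; lra).
  split; [apply Rmin_glb_lt; lra |].
  intros t [Ht0 Ht]; pose proof (Rmin_l 1 (c / (M + 1)));
    pose proof (Rmin_r 1 (c / (M + 1))).
  assert (Hsmall : t * (M + 1) < c).
  { assert (Htq : t < c / (M + 1)) by lra.
    apply (Rmult_lt_compat_r (M + 1)) in Htq; [| lra].
    replace (c / (M + 1) * (M + 1)) with c in Htq by (field; lra); exact Htq. }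
  rewrite Rabs_mult, (Rabs_right t) by lra.
  specialize (HB t ltac:(lra)); pose proof (Rabs_pos (g t)); nra.
Qed.

(* A polynomial is identically 0, positive, or negative on some (0, e):
   its sign near 0 is that of its lowest nonzero coefficient. *)
Lemma ev_sign_near0 l :
  near0 (fun t => ev l t = 0) \/ near0 (fun t => 0 < ev l t) \/
  near0 (fun t => ev l t < 0).
Proof.
  induction l as [| a l IH]; simpl.
  - left; now apply near0_always.
  - destruct (Req_dec a 0) as [-> | Ha].
    + destruct IH as [H | [H | H]]; [left | right; left | right; right];
        revert H; apply near0_mono; intros t Ht H; nra.
    + destruct (ev_bounded l) as [M [HM HB]].
      pose proof (near0_small_multiple (ev l) M (Rabs a) HM
                    (Rabs_pos_lt a Ha) HB) as Hsmall.
      right; destruct (Rlt_or_le 0 a); [left | right];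
        revert Hsmall; apply near0_mono; intros t _ Ht;
        apply Rabs_def2 in Ht.
      * rewrite Rabs_right in Ht; lra.
      * rewrite Rabs_left1 in Ht; lra.
Qed.

Lemma upoly_sign_near0 f :
  upoly f ->
  near0 (fun t => f t = 0) \/ near0 (fun t => 0 < f t) \/
  near0 (fun t => f t < 0).
Proof.
  intros [l Hl].
  destruct (ev_sign_near0 l) as [H | [H | H]]; [left | right; left | right; right];
    revert H; apply near0_mono; intros t _; now rewrite Hl.
Qed.

Definition settles (P : R -> Prop) : Prop :=
  exists b : bool, near0 (fun t => P t <-> b = true).

Lemma settles_ext (P Q : R -> Prop) :
  (forall t, P t <-> Q t) -> settles P -> settles Q.
Proof.
  intros HPQ [b Hb]; exists b; revert Hb; apply near0_mono.
  intros t _; rewrite HPQ; tauto.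
Qed.

Lemma settles_and (P Q : R -> Prop) :
  settles P -> settles Q -> settles (fun t => P t /\ Q t).
Proof.
  intros [b1 H1] [b2 H2]; exists (b1 && b2)%bool.
  generalize (near0_and _ _ H1 H2); apply near0_mono.
  intros t _; rewrite Bool.andb_true_iff; tauto.
Qed.

Lemma settles_or (P Q : R -> Prop) :
  settles P -> settles Q -> settles (fun t => P t \/ Q t).
Proof.
  intros [b1 H1] [b2 H2]; exists (b1 || b2)%bool.
  generalize (near0_and _ _ H1 H2); apply near0_mono.
  intros t _; rewrite Bool.orb_true_iff; tauto.
Qed.

Lemma settles_Forall {T} (Q : T -> R -> Prop) (c : list T) :
  (forall a, settles (Q a)) -> settles (fun t => Forall (fun a => Q a t) c).
Proof.
  intros HQ; induction c as [| a c IH].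
  - exists true; apply near0_always; intros t; split; auto.
  - apply (settles_ext (fun t => Q a t /\ Forall (fun a => Q a t) c)).
    + intros t; symmetry; apply Forall_cons_iff.
    + now apply settles_and.
Qed.

Lemma settles_Exists {T} (Q : T -> R -> Prop) (c : list T) :
  (forall a, settles (Q a)) -> settles (fun t => Exists (fun a => Q a t) c).
Proof.
  intros HQ; induction c as [| a c IH].
  - exists false; apply near0_always; intros t.
    split; [intros H; inversion H | discriminate].
  - apply (settles_ext (fun t => Q a t \/ Exists (fun a => Q a t) c)).
    + intros t; symmetry; apply Exists_cons.
    + now apply settles_or.
Qed.

Lemma settles_sign_atom f (strict : bool) :
  upoly f -> settles (fun t => if strict then f t < 0 else f t = 0).
Proof.
  intros Hf; destruct (upoly_sign_near0 f Hf) as [H | [H | H]];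
    [exists (negb strict) | exists false | exists strict];
    revert H; apply near0_mono; intros t _ H; destruct strict; simpl;
    split; intros; try lra; discriminate.
Qed.

Definition poly_curve (gamma : R -> vec3) : Prop :=
  forall i, upoly (fun t => gamma t i).

Lemma peval_poly_curve gamma p :
  poly_curve gamma -> upoly (fun t => peval p (gamma t)).
Proof.
  intros Hg; induction p as [i | c | p IHp q IHq | p IHp q IHq]; simpl.
  - apply Hg.
  - apply upoly_const.
  - now apply upoly_add.
  - now apply upoly_mul.
Qed.

Lemma semialgebraic_settles (S : vec3 -> Prop) gamma :
  semialgebraic S -> poly_curve gamma -> settles (fun t => S (gamma t)).
Proof.
  intros [L HL] Hg.
  apply (settles_ext (fun t =>
           Exists (fun c => Forall (fun a => atom_holds a (gamma t)) c) L)).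
  - intros t; symmetry; apply HL.
  - apply settles_Exists; intros c; apply settles_Forall; intros [f strict].
    now apply settles_sign_atom, peval_poly_curve.
Qed.

Definition Amat : mat33 := fun i j =>
  match i, j with I0, I0 => 1 | I1, I1 => 2 | I2, I2 => 4 | _, _ => 0 end.

Definition Brow : row3 := fun _ => 1.

Lemma Amat_power_coords k x :
  matpow_vec Amat k x I0 = x I0 /\
  matpow_vec Amat k x I1 = 2 ^ k * x I1 /\
  matpow_vec Amat k x I2 = 2 ^ k * 2 ^ k * x I2.
Proof.
  induction k as [| k [H0 [H1 H2]]]; unfold matpow_vec in *; simpl.
  - repeat split; ring.
  - set (y := Nat.iter k (matvec Amat) x) in *.
    unfold matvec; simpl; rewrite H0, H1, H2; repeat split; ring.
Qed.

Definition curve (t : R) : vec3 :=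
  fun i => match i with I0 => 15 / 16 | I1 => -2 * t | I2 => t * t end.

Lemma poly_curve_curve : poly_curve curve.
Proof.
  intros []; simpl.
  - apply upoly_const.
  - apply upoly_mul; [apply upoly_const | apply upoly_id].
  - apply upoly_mul; apply upoly_id.
Qed.

Lemma NT_curve t :
  NT Amat Brow (curve t) <-> forall k : nat, 1 / 16 <= (t * 2 ^ k - 1) ^ 2.
Proof.
  unfold NT, rowvec, Brow.
  split; intros H k; specialize (H k);
    destruct (Amat_power_coords k (curve t)) as [H0 [H1 H2]];
    rewrite H0, H1, H2 in *; simpl in *; nra.
Qed.

Lemma half_pow_two_pow n : (/ 2) ^ n * 2 ^ n = 1.
Proof. rewrite <- Rpow_mult_distr, Rinv_l by lra; apply pow1. Qed.

(* At t = 2^-m the guard fails after m iterations: (1 - 1)^2 < 1/16. *)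
Lemma curve_dyadic_notin m : ~ NT Amat Brow (curve ((/ 2) ^ m)).
Proof.
  rewrite NT_curve; intros H; specialize (H m).
  rewrite half_pow_two_pow in H; lra.
Qed.

Lemma dyadic_ratio_gap m k : 1 <= (/ 2) ^ m * 2 ^ k \/ (/ 2) ^ m * 2 ^ k <= / 2.
Proof.
  destruct (Nat.le_gt_cases m k) as [Hmk | Hkm].
  - left; replace k with (m + (k - m))%nat by lia.
    rewrite pow_add, <- Rmult_assoc, half_pow_two_pow, Rmult_1_l.
    apply pow_R1_Rle; lra.
  - right; replace m with (k + S (m - k - 1))%nat by lia.
    rewrite pow_add.
    replace ((/ 2) ^ k * (/ 2) ^ S (m - k - 1) * 2 ^ k)
      with ((/ 2) ^ S (m - k - 1) * ((/ 2) ^ k * 2 ^ k)) by ring.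
    rewrite half_pow_two_pow; simpl.
    assert (Hd : 0 < (/ 2) ^ (m - k - 1) <= 1).
    { split; [apply pow_lt; lra |].
      rewrite <- (pow1 (m - k - 1)); apply pow_incr; lra. }
    lra.
Qed.

(* At t = 11/8 * 2^-m every 2^k t is >= 11/8 or <= 11/16, so the guard holds. *)
Lemma curve_dyadic_in m : NT Amat Brow (curve (11 / 8 * (/ 2) ^ m)).
Proof.
  rewrite NT_curve; intros k.
  replace (11 / 8 * (/ 2) ^ m * 2 ^ k) with (11 / 8 * ((/ 2) ^ m * 2 ^ k))
    by ring.
  destruct (dyadic_ratio_gap m k); nra.
Qed.

Theorem theorem2 :
  exists (A : mat33) (B : row3), ~ semialgebraic (NT A B).
Proof.
  exists Amat, Brow; intros Hsa.
  destruct (semialgebraic_settles _ _ Hsa poly_curve_curve) as [[|] Hb].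
  - (* NT would eventually contain the curve, but misses gamma(2^-m). *)
    destruct (near0_geometric _ 1 ltac:(lra) Hb) as [m Hm].
    rewrite Rmult_1_l in Hm.
    now apply (curve_dyadic_notin m), Hm.
  - (* NT would eventually miss the curve, but contains gamma(11/8 * 2^-m). *)
    destruct (near0_geometric _ (11 / 8) ltac:(lra) Hb) as [m Hm].
    discriminate (proj1 Hm (curve_dyadic_in m)).
Qed.
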